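(* Let $0<u<v<1$. Suppose $\mathcal E^c_u(z)=\mathcal E^c_v(z)=\mathcal E_u(z)$ for some $z\in\mathbb R$. Then $\mathcal E^c_u=\mathcal E^c_v$ on $(-\infty,z]$.
   Context: Let $\mu,\nu$ be probability measures on $\mathbb R$ with finite first moments and $\mu\le_{cx}\nu$. Put $P_\eta(k)=\int(k-x)^+\eta(dx)$. Let $G$ be any quantile function of $\mu$. For $u\in(0,1)$ let $\mu_u(A)=\mu(A\cap(-\infty,G(u)))+\big(u-\mu((-\infty,G(u)))\big)\delta_{G(u)}(A)$ and $\mathcal E_u=P_\nu-P_{\mu_u}$. $f^c$ denotes the largest convex function lying below $f$. *)

From HB Require Import structures.
From mathcomp Require Import all_boot all_order all_algebra.
From mathcomp Require Import all_classical all_reals all_analysis.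
Set Implicit Arguments. Unset Strict Implicit. Unset Printing Implicit Defensive.
Import Order.TTheory GRing.Theory Num.Theory.
Local Open Scope classical_set_scope.
Local Open Scope ring_scope.

Section defs.
Variable R : realType.

Definition cvxR (f : R -> R) : Prop :=
  convex_function (E := R^o) [set: R^o] f.

Definition first_moment (eta : probability R R) : Prop :=
  eta.-integrable [set: R] (fun x => (x : R)%:E).

Definition cx_le (mu nu : probability R R) : Prop :=
  forall f : R -> R, cvxR f ->
    (\int[mu]_x (f x)%:E <= \int[nu]_x (f x)%:E)%E.

Definition quantile_fun (mu : probability R R) (G : R -> R) : Prop :=
  forall u : R, 0 < u < 1 ->
    (mu `]-oo, G u[%classic <= u%:E <= mu `]-oo, G u]%classic)%E.

Definition Pput (eta : {measure set R -> \bar R}) (k : R) : \bar R :=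
  (\int[eta]_x (Num.max (k - x) 0)%:E)%E.

(* P_{mu_u}(k), where
   mu_u = mu restricted to (-oo, G u) + (u - mu((-oo,G u))) delta_{G u};
   the integral against mu_u is written out as the integral over the
   restriction plus the contribution of the atom at G u. *)
Definition Pmu_u (mu : probability R R) (G : R -> R) (u k : R) : \bar R :=
  ((\int[mu]_(x in `]-oo, G u[%classic) (Num.max (k - x) 0)%:E)
   + ((u - fine (mu `]-oo, G u[%classic)) * Num.max (k - G u) 0)%:E)%E.

(* E_u = P_nu - P_{mu_u}  (real valued: both are finite under the
   finite first moment hypothesis) *)
Definition Eu (mu nu : probability R R) (G : R -> R) (u : R) (k : R) : R :=
  fine (Pput nu k) - fine (Pmu_u mu G u k).

Definition conv_env (f : R -> R) (x : R) : \bar R :=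
  ereal_sup [set (g x)%:E | g in [set g : R -> R | cvxR g /\ (forall y, g y <= f y)]].

End defs.

From HB Require Import structures.
From mathcomp Require Import all_boot all_order all_algebra.
From mathcomp Require Import all_classical all_reals all_analysis.
From mathcomp Require Import lra ring measurable_realfun.
Set Implicit Arguments.
Unset Strict Implicit.
Unset Printing Implicit Defensive.
Import Order.TTheory GRing.Theory Num.Theory.
Local Open Scope classical_set_scope.
Local Open Scope ring_scope.

(* Since mu_v - mu_u is a nonnegative measure carried by [G u, G v], the
   difference E_u - E_v = P_{mu_v} - P_{mu_u} is nonnegative and nondecreasing
   in the strike.  The hypotheses give E_u(z) = E_v^c(z) <= E_v(z), so this
   difference vanishes at z, hence on (-oo, z]: E_u = E_v there.
   Now let f = g on (-oo, z] with g^c(z) = f(z).  For a convex minorant f' of f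
   and e > 0 pick a convex minorant g' of g with g'(z) > f'(z) - e; gluing
   max(f' - e, g') on (-oo, z] to g' on (z, +oo) gives a convex minorant of g,
   so f^c <= g^c on (-oo, z].  Applied in both directions this yields the
   claim. *)
Section convex_envelope.
Variable R : realType.
Implicit Types (f g : R -> R) (a b c x y z : R).

Lemma cvxRP f : cvxR f <->
  (forall t x y, 0 <= t <= 1 -> f (t * x + (1 - t) * y) <= t * f x + (1 - t) * f y).
Proof.
split=> [fcvx t x y /andP[t0 t1]|fcvx t x y _ _].
  exact: (fcvx (Itv01 t0 t1) x y (mem_set I) (mem_set I)).
exact/fcvx/andP.
Qed.

Definition below_chords f := forall a b c, a < b -> b < c ->
  (c - a) * f b <= (c - b) * f a + (b - a) * f c.

Lemma cvxR_below_chords f : cvxR f <-> below_chords f.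
Proof.
split=> [/cvxRP fcvx a b c ab bc|fch].
  have ca : 0 < c - a by lra.
  have t01 : 0 <= (c - b) / (c - a) <= 1.
    by rewrite divr_ge0 ?ler_pdivrMr /=; lra.
  have := fcvx _ a c t01; rewrite -(ler_pM2l ca).
  have -> : (c - b) / (c - a) * a + (1 - (c - b) / (c - a)) * c = b.
    by field; lra.
  suff -> : (c - a) * ((c - b) / (c - a) * f a + (1 - (c - b) / (c - a)) * f c)
          = (c - b) * f a + (b - a) * f c by [].
  by field; lra.
apply/cvxRP => t x y /andP[t0 t1].
wlog xy : t x y t0 t1 / x <= y.
  move=> hwlog; have [|yx] := leP x y; first exact: hwlog.
  have swap (p q : R) : t * p + (1 - t) * q = (1 - t) * q + (1 - (1 - t)) * p.
    by ring.
  by rewrite (swap x y) (swap (f x) (f y)); apply: hwlog; lra.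
have [->|t0'] := eqVneq t 0; first by rewrite !mul0r !add0r subr0 !mul1r.
have [->|t1'] := eqVneq t 1; first by rewrite subrr !mul0r !addr0 !mul1r.
move: xy; rewrite le_eqVlt => /predU1P[->|xy].
  by rewrite -!mulrDl subrKC !mul1r.
have {t0 t0'}t0 : 0 < t by rewrite lt_neqAle eq_sym t0' t0.
have {t1 t1'}t1 : t < 1 by rewrite lt_neqAle t1' t1.
have ltx : x < t * x + (1 - t) * y by nra.
have lty : t * x + (1 - t) * y < y by nra.
rewrite -(ler_pM2l (_ : 0 < y - x)) ?subr_gt0 //.
apply: (le_trans (fch _ _ _ ltx lty)).
by rewrite le_eqVlt; apply/orP; left; apply/eqP; ring.
Qed.

Lemma below_chords_max f g :
  below_chords f -> below_chords g -> below_chords (fun x => Num.max (f x) (g x)).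
Proof.
move=> fch gch a b c ab bc.
have cb : 0 <= c - b by lra.
have ba : 0 <= b - a by lra.
have maxl (p q : R) : p <= Num.max p q by rewrite le_max lexx.
have maxr (p q : R) : q <= Num.max p q by rewrite le_max lexx orbT.
have := ler_wpM2l cb (maxl (f a) (g a)); have := ler_wpM2l cb (maxr (f a) (g a)).
have := ler_wpM2l ba (maxl (f c) (g c)); have := ler_wpM2l ba (maxr (f c) (g c)).
have := fch a b c ab bc; have := gch a b c ab bc.
by case: (lerP (f b) (g b)); lra.
Qed.

Lemma below_chords_subr f e : below_chords f -> below_chords (fun x => f x - e).
Proof.
move=> fch a b c ab bc; have := fch a b c ab bc.
suff -> : (c - b) * (f a - e) + (b - a) * (f c - e)
        = (c - b) * f a + (b - a) * f c - (c - a) * e by lra.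
by ring.
Qed.

Lemma below_chords_glue f g z : below_chords f -> below_chords g ->
  f z = g z -> (forall y, y <= z -> g y <= f y) ->
  below_chords (fun y => if y <= z then f y else g y).
Proof.
move=> fch gch fgz gf a b c ab bc /=.
have [cz|zc] := leP c z.
  have [az bz] : a <= z /\ b <= z by split; lra.
  by rewrite az bz; exact: fch.
have [za|az] := ltP z a.
  by rewrite [b <= z]leNgt (lt_trans za ab); exact: gch.
have cb : 0 <= c - b by lra.
have [bz|zb] := ltP b z.
  rewrite (ltW bz) -(ler_pM2l (_ : 0 < z - b)) ?subr_gt0 //.
  have := ler_wpM2l cb (fch a b z ab bz).
  have := ler_wpM2l (_ : 0 <= b - a) (gch b z c bz zc); rewrite -fgz.
  have := ler_wpM2l (_ : 0 <= (b - a) * (c - z)) (gf b (ltW bz)).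
  by nra.
have -> : (if b <= z then f b else g b) = g b.
  by case: ifP => // bz; rewrite (_ : b = z) //; apply/eqP; rewrite eq_le bz.
have := gch a b c ab bc; have := ler_wpM2l cb (gf a az); lra.
Qed.

Lemma conv_env_le f x : (conv_env f x <= (f x)%:E)%E.
Proof. by apply/ereal_supP => _ [g [_ gf] <-]; rewrite lee_fin. Qed.

Lemma le_conv_env_halfline f g z x : (forall y, y <= z -> f y = g y) ->
  conv_env g z = (f z)%:E -> x <= z -> (conv_env f x <= conv_env g x)%E.
Proof.
move=> fg gcz xz; apply/ereal_supP => _ [f' [/cvxR_below_chords f'ch f'f] <-].
apply/lee_subgt0Pr => e e0.
have /ereal_sup_gt[_ [g' [/cvxR_below_chords g'ch g'g] <-]] :
    ((f' z - e)%:E < conv_env g z)%E.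
  by rewrite gcz lte_fin; have := f'f z; lra.
rewrite lte_fin => g'z.
pose h y := if y <= z then Num.max (f' y - e) (g' y) else g' y.
have hcvx : cvxR h.
  apply/cvxR_below_chords/below_chords_glue => //.
  - exact/below_chords_max/g'ch/below_chords_subr.
  - by rewrite /Num.max ifT.
  - by move=> y _; rewrite le_max lexx orbT.
have hg y : h y <= g y.
  rewrite /h; case: ifP => yz; last exact: g'g.
  by rewrite ge_max g'g -fg // andbT; have := f'f y; lra.
apply: (@le_trans _ _ (h x)%:E); last by apply: ereal_sup_ubound; exists h.
by rewrite /h xz -EFinB lee_fin le_max lexx.
Qed.

Lemma conv_env_eq_halfline f g z : (forall y, y <= z -> f y = g y) ->
  conv_env f z = conv_env g z -> conv_env g z = (f z)%:E ->
  forall x, x <= z -> conv_env f x = conv_env g x.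
Proof.
move=> fg fgcz gcz x xz; apply/eqP; rewrite eq_le.
apply/andP; split; apply: (@le_conv_env_halfline _ _ z) => //.
- by move=> y yz; rewrite fg.
- by rewrite fgcz gcz fg.
Qed.

End convex_envelope.

Section put_payoff.
Variable R : realType.
Implicit Types (a b k l x : R) (A : set R).

Definition put_payoff k x : R := Num.max (k - x) 0.

Lemma put_payoff_ge0 k x : 0 <= put_payoff k x.
Proof. by rewrite le_max lexx orbT. Qed.

Lemma put_payoff_homo x : {homo put_payoff ^~ x : k l / k <= l}.
Proof. by move=> k l kl; rewrite /put_payoff le_max2 // lerB. Qed.

Definition nonneg_nondecreasing (f : R -> R) :=
  (forall x, 0 <= f x) /\ {homo f : x y / x <= y}.

Lemma nonneg_nondecreasingD f g : nonneg_nondecreasing f ->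
  nonneg_nondecreasing g -> nonneg_nondecreasing (fun x => f x + g x).
Proof.
move=> [f0 fh] [g0 gh]; split=> [x|x y xy]; first exact: addr_ge0.
exact: lerD (fh _ _ xy) (gh _ _ xy).
Qed.

Lemma nonneg_nondecreasingZ c f : 0 <= c ->
  nonneg_nondecreasing f -> nonneg_nondecreasing (fun x => c * f x).
Proof.
move=> c0 [f0 fh]; split=> [x|x y xy]; first exact: mulr_ge0.
exact: ler_wpM2l (fh _ _ xy).
Qed.

Lemma nonneg_nondecreasing_put_payoff x : nonneg_nondecreasing (put_payoff ^~ x).
Proof. by split=> [k|]; [exact: put_payoff_ge0|exact: put_payoff_homo]. Qed.

Lemma measurable_put_payoff k A : measurable_fun A (put_payoff k).
Proof. by apply: measurable_maxr; [exact: measurable_funB|exact: measurable_cst]. Qed.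

Lemma Rintegral_itvNyo_split (mu : {measure set R -> \bar R}) f a b : a < b ->
    mu.-integrable `]-oo, b[ (EFin \o f) ->
  \int[mu]_(x in `]-oo, b[) f x = \int[mu]_(x in `]-oo, a[) f x
    + f a * fine (mu [set a]) + \int[mu]_(x in `]a, b[) f x.
Proof.
move=> ab intf.
have mNya : measurable (`]-oo, a[ `|` [set a] : set R).
  by apply: measurableU; [exact: measurable_itv|exact: measurable_set1].
have itvE : `]-oo, b[%classic = (`]-oo, a[ `|` [set a]) `|` `]a, b[ :> set R.
  by rewrite setUitv1 // -itv_bndbnd_setU //= bnd_simp ltW.
rewrite itvE in intf *.
rewrite Rintegral_setU //; last first.
  apply/disj_setPS => x [[|->]] /=; rewrite !in_itv /= ?ltxx //.
  by move=> xa /andP[ax _]; lra.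
rewrite Rintegral_setU //; first last.
- by apply/disj_setPS => x [+ /= xa]; rewrite xa /= in_itv /= ltxx.
- by apply: integrableS intf => //; exact: measurableU.
suff -> : \int[mu]_(x in [set a]) f x = f a * fine (mu [set a]) by [].
by rewrite -Rintegral_cst //; apply: eq_Rintegral => x /set_mem ->.
Qed.

Lemma fine_measure_itvNyc (mu : {finite_measure set R -> \bar R}) a :
  fine (mu `]-oo, a]%classic) = fine (mu `]-oo, a[%classic) + fine (mu [set a]).
Proof.
rewrite -(@setUitv1 _ _ _ _ true) // measureU //; last first.
  by rewrite -subset0 => x [+ /= xa]; rewrite xa /= in_itv /= ltxx.
by rewrite fineD //; apply: fin_num_measure; [exact: measurable_itv|exact: measurable_set1].
Qed.

End put_payoff.

Section put_price.
Variable R : realType.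
Variable mu : probability R R.
Hypothesis mu_first_moment : first_moment mu.
Implicit Types (k l x : R) (A : set R).

Lemma integrable_put_payoff k A : measurable A ->
  mu.-integrable A (EFin \o put_payoff k).
Proof.
move=> mA; apply: (integrableS measurableT) => //.
have intkx : mu.-integrable setT (fun x => ((EFin \o cst k) x - x%:E)%E).
  by apply: integrableB => //; exact: finite_measure_integrable_cst.
apply: le_integrable intkx => //.
  by apply/measurable_EFinP; exact: measurable_put_payoff.
move=> x _; rewrite /= lee_fin /put_payoff.
by case: (lerP (k - x) 0) => // _; rewrite normr0.
Qed.

Lemma nonneg_nondecreasing_Rintegral_put_payoff A : measurable A ->
  nonneg_nondecreasing (fun k => \int[mu]_(x in A) put_payoff k x).
Proof.
move=> mA; split=> [k|k l kl].
  by apply: Rintegral_ge0 => x _; exact: put_payoff_ge0.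
apply: le_Rintegral; rewrite ?integrable_put_payoff //.
by move=> x _; exact: put_payoff_homo.
Qed.

Variable G : R -> R.
Hypothesis G_quantile : quantile_fun mu G.

Lemma quantile_fun_le u v : 0 < u -> u < v -> v < 1 -> G u <= G v.
Proof.
move=> u0 uv v1; rewrite leNgt; apply/negP => GvGu.
have /G_quantile/andP[Gu_lb _] : 0 < u < 1 by lra.
have /G_quantile/andP[_ Gv_ub] : 0 < v < 1 by lra.
have GvGu_sub : `]-oo, G v]%classic `<=` `]-oo, G u[%classic.
  by move=> x /=; rewrite !in_itv /= => /le_lt_trans; apply.
have := le_measure mu (mem_set (measurable_itv _)) (mem_set (measurable_itv _))
  GvGu_sub.
move=> /(le_trans Gv_ub) /le_trans /(_ Gu_lb); rewrite lee_fin; lra.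
Qed.

Lemma quantile_fun_fine_bounds w : 0 < w < 1 ->
  fine (mu `]-oo, G w[%classic) <= w
  <= fine (mu `]-oo, G w[%classic) + fine (mu [set G w]).
Proof.
move=> /G_quantile /andP[lb ub]; rewrite -fine_measure_itvNyc -!lee_fin.
by rewrite !fineK ?lb ?ub // fin_num_measure //; exact: measurable_itv.
Qed.

Lemma Pmu_uE w k : fine (Pmu_u mu G w k) =
  \int[mu]_(x in `]-oo, G w[) put_payoff k x
  + (w - fine (mu `]-oo, G w[%classic)) * put_payoff k (G w).
Proof.
rewrite /Pmu_u fineD //.
have mNy : measurable (`]-oo, G w[%classic : set R) by exact: measurable_itv.
by have := integrable_fin_num mNy (integrable_put_payoff k mNy).
Qed.

Lemma nonneg_nondecreasing_Pmu_uB u v : 0 < u -> u < v -> v < 1 ->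
  nonneg_nondecreasing (fun k => fine (Pmu_u mu G v k) - fine (Pmu_u mu G u k)).
Proof.
move=> u0 uv v1.
have /quantile_fun_fine_bounds/andP[_ u_ub] : 0 < u < 1 by lra.
have /quantile_fun_fine_bounds/andP[v_lb _] : 0 < v < 1 by lra.
have := quantile_fun_le u0 uv v1; rewrite le_eqVlt => /predU1P[GuGv|GuGv].
  rewrite (_ : (fun k => _) = fun k => (v - u) * put_payoff k (G u)).
    by apply: nonneg_nondecreasingZ; [lra|exact: nonneg_nondecreasing_put_payoff].
  by apply/funext => k; rewrite !Pmu_uE -GuGv; ring.
(* mu_v - mu_u is (mu{G u} - u + mu(-oo, G u)) delta_{G u} + mu on ]G u, G v[
   + (v - mu(-oo, G v)) delta_{G v}, with nonnegative weights by the quantile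
   bounds *)
rewrite (_ : (fun k => _) = fun k =>
  (fine (mu [set G u]) - (u - fine (mu `]-oo, G u[%classic))) * put_payoff k (G u)
  + \int[mu]_(x in `]G u, G v[) put_payoff k x
  + (v - fine (mu `]-oo, G v[%classic)) * put_payoff k (G v)).
  apply: nonneg_nondecreasingD; first apply: nonneg_nondecreasingD.
  - by apply: nonneg_nondecreasingZ; [lra|exact: nonneg_nondecreasing_put_payoff].
  - by apply: nonneg_nondecreasing_Rintegral_put_payoff; exact: measurable_itv.
  - by apply: nonneg_nondecreasingZ; [lra|exact: nonneg_nondecreasing_put_payoff].
apply/funext => k; rewrite !Pmu_uE (Rintegral_itvNyo_split GuGv); first ring.
by apply: integrable_put_payoff; exact: measurable_itv.
Qed.

End put_price.

Theorem lemma4p5 (R : realType) (mu nu : probability R R) (G : R -> R)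
    (u v z : R) :
  first_moment mu -> first_moment nu -> cx_le mu nu ->
  quantile_fun mu G ->
  0 < u -> u < v -> v < 1 ->
  conv_env (Eu mu nu G u) z = conv_env (Eu mu nu G v) z ->
  conv_env (Eu mu nu G v) z = (Eu mu nu G u z)%:E ->
  forall x : R, x <= z ->
    conv_env (Eu mu nu G u) x = conv_env (Eu mu nu G v) x.
Proof.
(* [nu]'s moment and the convex order only make E_u finite in the paper; here
   [Eu] is real-valued by construction. *)
move=> mu_moment _ _ G_quantile u0 uv v1 conv_uv conv_vz.
have [Pmu_uB_ge0 Pmu_uB_homo] :=
  nonneg_nondecreasing_Pmu_uB mu_moment G_quantile u0 uv v1.
have EuB k : Eu mu nu G u k - Eu mu nu G v k
           = fine (Pmu_u mu G v k) - fine (Pmu_u mu G u k).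
  by rewrite /Eu; ring.
have Eu_le : Eu mu nu G u z <= Eu mu nu G v z.
  by rewrite -lee_fin -conv_vz conv_env_le.
have Eu_eq y : y <= z -> Eu mu nu G u y = Eu mu nu G v y.
  move=> yz; have := Pmu_uB_homo _ _ yz; have := Pmu_uB_ge0 y.
  by rewrite -!EuB; lra.
exact: conv_env_eq_halfline Eu_eq conv_uv conv_vz.
Qed.
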